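(* Let $b\ge1$ and let $f\in\mathcal{M}^b$ be not identically $0$, with set-array representation $(A_1,A_2,\ldots,A_b)$ (so $A_1\neq\emptyset$). Let $f^*\in\mathcal{M}^b$ be the multiset with set-array representation $(A_1,\emptyset,\ldots,\emptyset)$. Then $d(f^* )\ge d(f)$, and the inequality is strict if $A_2\neq\emptyset$.
   Context: $\mathcal{M}^b$ is the set of finitely supported functions $f:\mathbb{N}\to\{0,\ldots,b\}$, $\mathbb{N}=\{0,1,\ldots\}$. The set-array representation of $f$ is $(A_1,\ldots,A_b)$ with $A_i=\{a:f(a)\ge i\}$. Multiset addition is coordinatewise on set arrays, $(A_i)_i+(B_i)_i=(A_i+B_i)_i$, where $S+T=\{s+t:s\in S,t\in T\}$ and $S+\emptyset=\emptyset$. $g\in\mathcal{M}^b$ is a divisor of $f$ if $f=g+h$ for some $h\in\mathcal{M}^b$; $d(f)$ is the number of divisors of $f$. *)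

From mathcomp Require Import all_boot.
Set Implicit Arguments. Unset Strict Implicit. Unset Printing Implicit Defensive.

Definition inMb (b : nat) (f : nat -> nat) : Prop :=
  (forall a, f a <= b) /\ exists N, forall a, N <= a -> f a = 0.

Definition setA (f : nat -> nat) (i : nat) : nat -> Prop := fun a => i <= f a.

Definition sumset (S T : nat -> Prop) : nat -> Prop :=
  fun c => exists s t, S s /\ T t /\ s + t = c.

(* h = f + g in M^b: the set array of h is the coordinatewise sumset
   of the set arrays of f and g. *)
Definition msum_is (b : nat) (f g h : nat -> nat) : Prop :=
  inMb b h /\
  forall i, 1 <= i <= b -> forall c, setA h i c <-> sumset (setA f i) (setA g i) c.

Definition is_divisor (b : nat) (f g : nat -> nat) : Prop :=
  inMb b g /\ exists h, inMb b h /\ msum_is b g h f.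

Definition has_card (P : (nat -> nat) -> Prop) (n : nat) : Prop :=
  exists e : 'I_n -> (nat -> nat),
    injective e /\ forall g, P g <-> exists i, e i = g.

Definition fstar (f : nat -> nat) : nat -> nat := fun a => if 0 < f a then 1 else 0.

From mathcomp Require Import all_boot zify boolp.
Set Implicit Arguments. Unset Strict Implicit.

(* Every divisor g of f (f = g + h) is also a divisor of f^*, with cofactor
   h^*: only the first level of the set array survives the starring, and there
   A_1(f) = A_1(g) + A_1(h) still holds.  Conversely f^* divides itself, since
   f^* = f^* + 1_{0}, but f^* divides f only when A_2(f) is empty, because a
   divisor of f with values at most 1 contributes nothing to level 2.  All
   divisors of f^* are supported below the support of f, so both divisor sets
   embed into one finite type, where inclusion gives the inequalities. *)

Section CountInImage.

Variables (T : finType) (e : T -> nat -> nat).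

Definition count_in (P : (nat -> nat) -> Prop) : nat := #|[pred t | `[< P (e t) >]]|.

Lemma has_card_count_in (P : (nat -> nat) -> Prop) :
  injective e -> (forall g, P g -> exists t, e t = g) -> has_card P (count_in P).
Proof.
move=> e_inj P_im; exists (fun i => e (enum_val i)); split.
  by move=> i j /e_inj /enum_val_inj.
move=> g; split=> [Pg | [i <-]]; last by have := enum_valP i; rewrite inE => /asboolP.
have [t et] := P_im g Pg.
have Pt : t \in [pred t | `[< P (e t) >]] by rewrite inE; apply/asboolP; rewrite et.
by exists (enum_rank_in Pt t); rewrite enum_rankK_in.
Qed.

Variables (P Q : (nat -> nat) -> Prop).
Hypothesis subPQ : forall g, P g -> Q g.

Lemma subset_count_in :
  [pred t | `[< P (e t) >]] \subset [pred t | `[< Q (e t) >]].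
Proof. by apply/subsetP => t; rewrite !inE => /asboolP /subPQ /asboolP. Qed.

Lemma count_in_le : count_in P <= count_in Q.
Proof. exact/subset_leq_card/subset_count_in. Qed.

Lemma count_in_lt (t : T) : Q (e t) -> ~ P (e t) -> count_in P < count_in Q.
Proof.
move=> Qt nPt; apply/proper_card/properP; split; first exact: subset_count_in.
by exists t; rewrite inE; apply/asboolP.
Qed.

End CountInImage.

Definition ext_ffun (N b : nat) (t : {ffun 'I_N -> 'I_b.+1}) : nat -> nat :=
  fun a => if insub a is Some i then nat_of_ord (t i) else 0.

Lemma ext_ffun_inj N b : injective (@ext_ffun N b).
Proof.
move=> t1 t2 eq_t; apply/ffunP => i; apply: val_inj.
by have := congr1 (fun g => g (val i)) eq_t; rewrite /ext_ffun valK.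
Qed.

Lemma ext_ffun_onto N b (g : nat -> nat) :
  (forall a, g a <= b) -> (forall a, N <= a -> g a = 0) ->
  exists t, @ext_ffun N b t = g.
Proof.
move=> g_le g_supp; exists [ffun i : 'I_N => inord (g i) : 'I_b.+1].
apply: funext => a; rewrite /ext_ffun.
case: insubP => [i _ <- | ]; first by rewrite ffunE inordK // ltnS.
by rewrite -leqNgt => /g_supp ->.
Qed.

Lemma fstar_le1 f a : fstar f a <= 1.
Proof. by rewrite /fstar; case: ifP. Qed.

Lemma fstar_eq0 f a : (fstar f a = 0) <-> (f a = 0).
Proof. rewrite /fstar; case: ifP => fa; split; lia. Qed.

Lemma fstarK f : fstar (fstar f) = fstar f.
Proof. by apply: funext => a; rewrite /fstar; case: (f a). Qed.

Lemma setA1_fstar f c : setA (fstar f) 1 c <-> setA f 1 c.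
Proof. rewrite /setA /fstar; case: ifP => fc; split; lia. Qed.

Lemma setA_le1 g i c : (forall a, g a <= 1) -> 1 < i -> ~ setA g i c.
Proof. by move=> g_le1 lt1i /(leq_trans lt1i); rewrite ltnNge g_le1. Qed.

Lemma inMb_fstar b f : 1 <= b -> inMb b f -> inMb b (fstar f).
Proof.
move=> b_gt0 [_ [N f_supp]]; split=> [a | ]; first exact: leq_trans (fstar_le1 f a) b_gt0.
by exists N => a /f_supp /fstar_eq0.
Qed.

Lemma msum_fstar b f g h :
  1 <= b -> inMb b h -> msum_is b g h f -> msum_is b g (fstar h) (fstar f).
Proof.
move=> b_gt0 hM [fM sum_gh]; split; first exact: inMb_fstar.
move=> i /andP [i_gt0 _] c; case: (ltngtP i 1) => [| lt1i | ->].
- by rewrite ltnNge i_gt0.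
- split=> [fc | [s [t [_ [ht _]]]]]; exfalso.
    exact: setA_le1 (@fstar_le1 f) lt1i fc.
  exact: setA_le1 (@fstar_le1 h) lt1i ht.
- rewrite setA1_fstar sum_gh ?b_gt0 //.
  by split=> -[s [t [gs [/setA1_fstar ht st]]]]; exists s, t.
Qed.

Lemma divisor_fstar b f g : 1 <= b -> is_divisor b f g -> is_divisor b (fstar f) g.
Proof.
move=> b_gt0 [gM [h [hM sum_gh]]]; split=> //.
by exists (fstar h); split; [exact: inMb_fstar | exact: msum_fstar].
Qed.

(* A point of A_1(g) plus a point of the nonempty A_1(h) lies in A_1(f). *)
Lemma divisor_supp b f g N :
  1 <= b -> (exists a, f a <> 0) -> (forall a, N <= a -> f a = 0) ->
  is_divisor b f g -> forall a, N <= a -> g a = 0.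
Proof.
move=> b_gt0 [a0 fa0] f_supp [_ [h [_ [_ sum_gh]]]] a leNa.
have sum1 := sum_gh 1 b_gt0.
have [s [t [_ [ht _]]]] : sumset (setA g 1) (setA h 1) a0.
  by apply/sum1; rewrite /setA lt0n; apply/eqP.
apply/eqP; rewrite -leqn0 leqNgt; apply/negP => ga.
have : setA f 1 (a + t) by apply/sum1; exists a, t.
by rewrite /setA f_supp // (leq_trans leNa (leq_addr _ _)).
Qed.

Definition delta0 (a : nat) : nat := if a == 0 then 1 else 0.

Lemma inMb_delta0 b : 1 <= b -> inMb b delta0.
Proof.
move=> b_gt0; split=> [a | ]; first by rewrite /delta0; case: eqP.
by exists 1 => -[].
Qed.

Lemma msum_delta0 b f : 1 <= b -> inMb b f -> msum_is b f delta0 (fstar f).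
Proof.
move=> b_gt0 fM; split=> [| i /andP [i_gt0 _] c]; first exact: inMb_fstar.
rewrite /setA /fstar; split=> [fc | [s [t [fs [dt <-]]]]].
  exists c, 0; rewrite /setA /delta0 addn0 /=.
  by move: fc; case: ifP => f_pos; lia.
move: dt; rewrite /setA /delta0; case: eqP => [-> | _] dt; last lia.
by rewrite addn0; case: ifP => f_pos; lia.
Qed.

Lemma divisor_fstar_refl b f : 1 <= b -> inMb b f -> is_divisor b (fstar f) (fstar f).
Proof.
move=> b_gt0 fM; have fsM := inMb_fstar b_gt0 fM.
split=> //; exists delta0; split; first exact: inMb_delta0.
by rewrite -{2}(fstarK f); apply: msum_delta0.
Qed.

Lemma not_divisor_le1 b f g :
  (forall a, g a <= 1) -> (exists a, setA f 2 a) -> ~ is_divisor b f g.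
Proof.
move=> g_le1 [a f2a] [_ [h [_ [[f_le _] sum_gh]]]].
have [s [t [g2s _]]] := proj1 (sum_gh 2 (leq_trans f2a (f_le a)) a) f2a.
exact: setA_le1 g_le1 (ltnSn 1) g2s.
Qed.

Theorem mainTheorem18 (b : nat) (f : nat -> nat) :
  1 <= b -> inMb b f -> (exists a, f a <> 0) ->
  exists n m : nat,
    has_card (is_divisor b f) n /\
    has_card (is_divisor b (fstar f)) m /\
    n <= m /\
    ((exists a, setA f 2 a) -> n < m).
Proof.
move=> b_gt0 fM f_nz; have [_ [N f_supp]] := fM.
have fstar_nz : exists a, fstar f a <> 0 by case: f_nz => a; exists a; move/fstar_eq0.
have fstar_supp a : N <= a -> fstar f a = 0 by move/f_supp/fstar_eq0.
have im_fstar g : is_divisor b (fstar f) g -> exists t, @ext_ffun N b t = g.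
  move=> g_div; apply: ext_ffun_onto; first by case: g_div => [[]].
  exact: divisor_supp b_gt0 fstar_nz fstar_supp g_div.
have sub_div g : is_divisor b f g -> is_divisor b (fstar f) g := divisor_fstar b_gt0.
have im_f g : is_divisor b f g -> exists t, @ext_ffun N b t = g.
  by move/sub_div/im_fstar.
exists (count_in (@ext_ffun N b) (is_divisor b f)),
       (count_in (@ext_ffun N b) (is_divisor b (fstar f))).
split; first exact: has_card_count_in (@ext_ffun_inj N b) im_f.
split; first exact: has_card_count_in (@ext_ffun_inj N b) im_fstar.
split=> [| f2]; first exact: count_in_le sub_div.
have [t et] := im_fstar _ (divisor_fstar_refl b_gt0 fM).
apply: (count_in_lt sub_div (t := t)); rewrite et; first exact: divisor_fstar_refl.
exact: not_divisor_le1 (@fstar_le1 f) f2.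
Qed.
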